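(* For every instance $I=(h_1\ge\dots\ge h_n>0)$ of discrete BGT there exists an eventually periodic schedule $S^*$ (a finite prefix followed by infinitely many repetitions of a fixed finite block) with $\mathrm{MH}(S^* )=\mathrm{OPT}(I)$. Moreover, for every schedule $S$ there is an eventually periodic schedule $S'$ with $\mathrm{MH}(S')\le\mathrm{MH}(S)$.
   Context: Discrete BGT: $n$ bamboos with growth rates $h_1\ge\dots\ge h_n>0$, initial heights $0$; a schedule is an infinite sequence $(i_1,i_2,\dots)$ over $\{1,\dots,n\}$, and at the end of day $j$ bamboo $b_{i_j}$ is cut to $0$ (one cut per day, no other cuts). Height of $b_i$ at time $t$ is $h_i$ times the time since its last cut (or since time $0$). $\mathrm{MH}(S)$ = supremum of all heights over all times; $\mathrm{OPT}(I)=\inf_S\mathrm{MH}(S)$. It is known that $\mathrm{OPT}(I)\le 2\sum_i h_i<\infty$. *)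

From mathcomp Require Import all_boot all_order all_algebra.
From mathcomp Require Import all_classical all_reals ereal.
Set Implicit Arguments. Unset Strict Implicit. Unset Printing Implicit Defensive.
Import Order.TTheory GRing.Theory Num.Theory.
Local Open Scope ring_scope.

(* A schedule for n bamboos: s d is the bamboo cut at the END of day d+1,
   i.e. at time d+1 (days are numbered 1,2,...; s is 0-indexed). *)
Definition schedule (n : nat) := nat -> 'I_n.

(* Time of the last cut of bamboo i at or before integer time m
   (0 if it has not been cut by then). *)
Definition lastcut n (s : schedule n) (i : 'I_n) (m : nat) : nat :=
  (\max_(k < m.+1 | (0 < k)%N && (s k.-1 == i)) (k : nat))%N.

(* Height of bamboo i at real time t >= 0: h_i times the time elapsed since
   its last cut (a cut performed at integer time k is already in effect at
   time k). *)
Definition height (R : realType) n (h : 'I_n -> R) (s : schedule n)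
    (i : 'I_n) (t : R) : R :=
  h i * (t - (lastcut s i (Num.truncn t))%:R).

Definition MH (R : realType) n (h : 'I_n -> R) (s : schedule n) : \bar R :=
  ereal_sup [set ((height h s i t)%:E)%E | i in [set: 'I_n] & t in [set t : R | 0 <= t]].

Definition OPT (R : realType) n (h : 'I_n -> R) : \bar R :=
  ereal_inf [set MH h s | s in [set: schedule n]].

Definition eventually_periodic n (s : schedule n) : Prop :=
  exists p0 per : nat, (0 < per)%N /\ forall t : nat, (p0 <= t)%N -> s (t + per)%N = s t.

(* Only the ages of the bamboos matter: if a_i(m) is the number of days since
   bamboo i was last cut, as seen at integer time m, then MH is the supremum of
   the values h_i (a_i(m) + 1).  When MH is finite all ages are bounded, so by
   pigeonhole the age vector takes the same value at two times a < b; replaying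
   days a, ..., b - 1 forever after day b produces an eventually periodic
   schedule whose ages are ages of the original one, hence whose MH is no
   larger.  For the same reason every MH below a bound B is one of the finitely
   many numbers h_i k with h_i k <= B, so the infimum OPT is attained. *)

From mathcomp Require Import all_boot all_order all_algebra.
From mathcomp Require Import all_classical all_reals ereal.
From mathcomp Require Import ring lra zify.
Import Order.TTheory GRing.Theory Num.Theory.
Set Implicit Arguments. Unset Strict Implicit. Unset Printing Implicit Defensive.
Local Open Scope ring_scope.


Section ExtremumOnFiniteRange.
Local Open Scope classical_set_scope.
Variables (d : Order.disp_t) (T : orderType d) (I : finType) (f : I -> T).

Lemma ex_min_sub_range (S : set T) : S !=set0 -> S `<=` range f ->
  exists2 x, S x & forall y, S y -> (x <= y)%O.
Proof.
move=> [y0 Sy0] Sf; have [i0 _ fi0] := Sf _ Sy0.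
have Pi0 : `[< S (f i0) >] by apply/asboolP; rewrite fi0.
case: (@arg_minP _ _ _ i0 (fun i => `[< S (f i) >]) f Pi0) => i /asboolP Si minf.
exists (f i) => // y Sy.
by have [j _ fjy] := Sf _ Sy; rewrite -fjy; apply/minf/asboolP; rewrite fjy.
Qed.

Lemma ex_max_sub_range (S : set T) : S !=set0 -> S `<=` range f ->
  exists2 x, S x & forall y, S y -> (y <= x)%O.
Proof.
move=> [y0 Sy0] Sf; have [i0 _ fi0] := Sf _ Sy0.
have Pi0 : `[< S (f i0) >] by apply/asboolP; rewrite fi0.
case: (@arg_maxP _ _ _ i0 (fun i => `[< S (f i) >]) f Pi0) => i /asboolP Si maxf.
exists (f i) => // y Sy.
by have [j _ fjy] := Sf _ Sy; rewrite -fjy; apply/maxf/asboolP; rewrite fjy.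
Qed.

End ExtremumOnFiniteRange.

Section Age.
Variables (n : nat) (s : schedule n).

Fixpoint age (i : 'I_n) (m : nat) : nat :=
  if m is m'.+1 then (if s m' == i then 0 else (age i m').+1)%N else 0%N.

Lemma lastcut_le i m : (lastcut s i m <= m)%N.
Proof. by apply/bigmax_leqP => k _; rewrite -ltnS. Qed.

Lemma lastcut_addn_age i m : (lastcut s i m + age i m)%N = m.
Proof.
elim: m => [|m IH]; first by apply/eqP; rewrite addn0 -leqn0 lastcut_le.
have -> : lastcut s i m.+1 = maxn (lastcut s i m) (if s m == i then m.+1 else 0%N).
  by rewrite /lastcut big_mkcond big_ord_recr /= -big_mkcond; case: (s m == i).
rewrite /=; case: (s m == i); last by rewrite maxn0 addnS IH.
by rewrite addn0; apply/maxn_idPr/leqW/lastcut_le.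
Qed.

End Age.

Section Loop.
Variables (n : nat) (s : schedule n) (a b : nat).
Hypothesis lt_ab : (a < b)%N.

Definition loop_index (m : nat) : nat :=
  if (m < b)%N then m else (a + (m - b) %% (b - a))%N.

Definition loop_schedule : schedule n := fun m => s (loop_index m).

Lemma loop_schedule_eventually_periodic : eventually_periodic loop_schedule.
Proof.
exists b, (b - a)%N; split; first by rewrite subn_gt0.
move=> m le_bm; rewrite /loop_schedule /loop_index.
by rewrite !ltnNge le_bm (leq_trans le_bm (leq_addr _ _)) /= -addnBAC // modnDr.
Qed.

Hypothesis age_ab : forall i, age s i a = age s i b.

Lemma age_loop_schedule i m : age loop_schedule i m = age s i (loop_index m).
Proof.
elim: m => [|m IH]; first by rewrite /loop_index (leq_ltn_trans (leq0n a) lt_ab).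
rewrite /= IH /loop_schedule /loop_index.
case: (ltnP m.+1 b) => [lt_m1b|le_bm1]; first by rewrite (ltn_trans (ltnSn m) lt_m1b).
case: (ltnP m b) => [lt_mb|le_bm].
  have eq_b : m.+1 = b by apply/eqP; rewrite eqn_leq le_bm1 lt_mb.
  by rewrite eq_b subnn mod0n addn0 age_ab -eq_b.
have p_gt0 : (0 < b - a)%N by rewrite subn_gt0.
have r_lt := ltn_pmod (m - b) p_gt0.
set r := ((m - b) %% (b - a))%N in r_lt *.
have -> : (m.+1 - b = (m - b) %/ (b - a) * (b - a) + r.+1)%N.
  by have := divn_eq (m - b) (b - a); rewrite -/r; lia.
rewrite modnMDl; case: (ltnP r.+1 (b - a)) => [r1_lt|r1_ge].
  by rewrite modn_small // addnS.
have r1_eq : r.+1 = (b - a)%N by apply/eqP; rewrite eqn_leq r_lt r1_ge.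
have eq_b : (a + r).+1 = b by rewrite -addnS r1_eq subnKC // ltnW.
by rewrite r1_eq modnn addn0 age_ab -eq_b.
Qed.

End Loop.

Lemma ages_repeat n (s : schedule n) K : (forall i m, age s i m < K)%N ->
  exists a b, (a < b)%N /\ forall i, age s i a = age s i b.
Proof.
move=> age_lt; pose T := {ffun 'I_n -> 'I_K}.
pose ages (m : 'I_#|T|.+1) : T := [ffun i => Ordinal (age_lt i m)].
have /injectivePn [x [y neq_xy eq_xy]] : ~~ injectiveb ages.
  by apply/negP => /injectiveP /leq_card; rewrite card_ord ltnn.
have eq_age i : age s i x = age s i y.
  by have := congr1 (fun g : T => val (g i)) eq_xy; rewrite /= !ffunE.
case: (ltngtP x y) => [lt_xy|lt_yx|/val_inj eq_xy'].
- by exists x, y.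
- by exists y, x; split => // i; rewrite eq_age.
- by rewrite eq_xy' eqxx in neq_xy.
Qed.

Section Heights.
Local Open Scope classical_set_scope.
Variables (R : realType) (n : nat) (h : 'I_n -> R).
Hypothesis n_gt0 : (0 < n)%N.
Hypothesis h_gt0 : forall i, 0 < h i.

Lemma height_age s i (t : R) :
  height h s i t = h i * (t - (Num.truncn t)%:R + (age s i (Num.truncn t))%:R).
Proof.
rewrite /height -{2}(lastcut_addn_age s i (Num.truncn t)) natrD.
by congr (_ * _); ring.
Qed.

Definition age_heights s : set (\bar R) :=
  [set (h i * (age s i m).+1%:R)%:E | i in [set: 'I_n] & m in [set: nat]].

(* On [m, m + 1) the height of bamboo i grows from h i * age to just below
   h i * (age + 1), the value it would reach at time m + 1 without a cut. *)
Lemma MH_age_heights s : MH h s = ereal_sup (age_heights s).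
Proof.
apply/eqP; rewrite eq_le; apply/andP; split.
  apply: ge_ereal_sup => _ [i _ [t /= t_ge0 <-]].
  apply: le_ereal_sup_tmp; exists (h i * (age s i (Num.truncn t)).+1%:R)%:E.
    by exists i => //; exists (Num.truncn t).
  rewrite lee_fin height_age ler_pM2l // [_.+1%:R]mulrS.
  by have := truncnS_gt t; rewrite mulrS; lra.
apply: ge_ereal_sup => _ [i _ [m _ <-]]; apply/lee_subgt0Pr => e e_gt0.
have hi_gt0 := h_gt0 i.
pose d := e / (h i + e).
have d_gt0 : 0 < d by rewrite divr_gt0 // addr_gt0.
have d_lt1 : d < 1 by rewrite ltr_pdivrMr ?addr_gt0 // mul1r ltrDr.
have hd_le : h i * d <= e.
  by rewrite /d mulrA ler_pdivrMr ?addr_gt0 // mulrDr mulrC lerDl ltW ?mulr_gt0.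
pose t := m%:R + 1 - d.
have trunc_t : Num.truncn t = m by apply: truncn_def; rewrite /t mulrS; lra.
apply: le_ereal_sup_tmp; exists (height h s i t)%:E.
  by exists i => //; exists t => //; rewrite /t /=; have := ler0n R m; lra.
rewrite -EFinB lee_fin height_age trunc_t /t mulrS.
suff : h i * (1 + (age s i m)%:R) - h i * d <= h i * (m%:R + 1 - d - m%:R + (age s i m)%:R).
  by lra.
by rewrite -mulrBr ler_pM2l //; lra.
Qed.

Lemma age_height_le_MH s i m : ((h i * (age s i m).+1%:R)%:E <= MH h s)%E.
Proof. by rewrite MH_age_heights; apply: ereal_sup_ubound; exists i => //; exists m. Qed.

Lemma height_bound (B : R) : exists K, forall i k, h i * k%:R <= B -> (k <= K)%N.
Proof.
exists (\max_(i < n) Num.truncn (B / h i))%N => i k hk_le.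
apply: leq_trans (leq_bigmax_cond _ (erefl true)).
have k_le : k%:R <= B / h i by rewrite ler_pdivlMr // mulrC.
by rewrite truncn_ge_nat //; apply: le_trans k_le.
Qed.

Definition grid (K : nat) : 'I_n * 'I_K.+1 -> \bar R := fun p => (h p.1 * p.2%:R)%:E.
Arguments grid K : clear implicits.

Section BoundedMH.
Variables (B : R) (K : nat).
Hypothesis height_le_B : forall i k, h i * k%:R <= B -> (k <= K)%N.

Lemma MH_le_ages_lt s : (MH h s <= B%:E)%E -> forall i m, (age s i m < K)%N.
Proof.
move=> MH_le i m; apply: height_le_B.
by rewrite -lee_fin; apply: le_trans (age_height_le_MH s i m) MH_le.
Qed.

Lemma MH_in_grid s : (MH h s <= B%:E)%E -> (range (grid K)) (MH h s).
Proof.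
move=> /MH_le_ages_lt age_lt.
pose idx i m : 'I_n * 'I_K.+1 := (i, Ordinal (age_lt i m : (age s i m).+1 < K.+1)%N).
have ne : age_heights s !=set0.
  by exists (grid K (idx (Ordinal n_gt0) 0%N)); exists (Ordinal n_gt0) => //;
    exists 0%N.
have sub : age_heights s `<=` range (grid K).
  by move=> _ [i _ [m _ <-]]; exists (idx i m).
have [_ [i _ [m _ <-]] maxx] := ex_max_sub_range ne sub.
suff -> : MH h s = grid K (idx i m) by exists (idx i m).
rewrite MH_age_heights; apply/eqP; rewrite eq_le ge_ereal_sup //.
by apply: ereal_sup_ubound; exists i => //; exists m.
Qed.

End BoundedMH.

Lemma MH_neqNy s : MH h s != -oo%E.
Proof. by rewrite -ltNye (lt_le_trans _ (age_height_le_MH s (Ordinal n_gt0) 0)) ?ltNyr. Qed.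

Lemma MH_loop_schedule_le s a b : (a < b)%N -> (forall i, age s i a = age s i b) ->
  (MH h (loop_schedule s a b) <= MH h s)%E.
Proof.
move=> lt_ab age_ab; rewrite !MH_age_heights; apply: le_ereal_sup => _ [i _ [m _ <-]].
by rewrite age_loop_schedule //; exists i => //; exists (loop_index a b m).
Qed.

Lemma exists_periodic_MH_le s :
  exists s', eventually_periodic s' /\ (MH h s' <= MH h s)%E.
Proof.
case MH_s: (MH h s) => [r| |].
- have [K height_le_r] := height_bound r.
  have MH_le : (MH h s <= r%:E)%E by rewrite MH_s.
  have [a [b [lt_ab age_ab]]] := ages_repeat (MH_le_ages_lt height_le_r MH_le).
  exists (loop_schedule s a b); rewrite -MH_s; split.
    exact: loop_schedule_eventually_periodic.
  exact: MH_loop_schedule_le.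
- by exists (fun=> Ordinal n_gt0); split; [exists 0%N, 1%N | rewrite leey].
- by have := MH_neqNy s; rewrite MH_s.
Qed.

Lemma OPT_attained : exists s, MH h s = OPT h.
Proof.
have [[s0 MH_s0]|all_oo] := pselect (exists s0, MH h s0 != +oo%E); last first.
  have MH_oo s : MH h s = +oo%E by apply: contrapT => /eqP ?; apply: all_oo; exists s.
  exists (fun=> Ordinal n_gt0); rewrite MH_oo; apply/eqP; rewrite eq_le leey andbT.
  by apply: le_ereal_inf_tmp => _ [s _ <-]; rewrite MH_oo.
have /fineK MH_s0_fin : MH h s0 \is a fin_num by rewrite fin_numE MH_s0 MH_neqNy.
set B := fine (MH h s0) in MH_s0_fin.
have [K height_le_B] := height_bound B.
pose S := [set x | exists s, MH h s = x /\ (x <= B%:E)%E].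
have ne : S !=set0 by exists (MH h s0); exists s0; rewrite MH_s0_fin.
have sub : S `<=` range (grid K).
  by move=> _ [s [<- MH_le]]; apply: MH_in_grid height_le_B _ MH_le.
have [_ [s1 [<- MH_s1_le]] min_s1] := ex_min_sub_range ne sub.
exists s1; apply/eqP; rewrite eq_le andbC ereal_inf_lbound /=; last by exists s1.
apply: le_ereal_inf_tmp => _ [s _ <-].
have [MH_le|MH_gt] := leP (MH h s) B%:E; first by apply: min_s1; exists s.
by rewrite (le_trans MH_s1_le) // ltW.
Qed.

End Heights.

Theorem mainTheorem6 (R : realType) (n : nat) (h : 'I_n -> R)
  (hn : (0 < n)%N)
  (hmono : forall i j : 'I_n, (i <= j)%N -> h j <= h i)
  (hpos : forall i : 'I_n, 0 < h i) :
  (exists sstar : schedule n, eventually_periodic sstar /\ MH h sstar = OPT h) /\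
  (forall s : schedule n, exists s' : schedule n,
      eventually_periodic s' /\ (MH h s' <= MH h s)%E).
Proof.
split; last exact: exists_periodic_MH_le.
have [s1 MH_s1] := OPT_attained hn hpos.
have [s' [periodic_s' MH_le]] := exists_periodic_MH_le hn hpos s1.
exists s'; split => //; apply/eqP; rewrite eq_le -{1}MH_s1 MH_le.
by apply: ereal_inf_lbound; exists s'.
Qed.
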